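(* Fix $1<p<\infty$. Let $\Omega$ be a probability space and let $D_Y,D_X,E_Y,E_X:\Omega\to\mathbb{R}$, $\lambda,\Theta>0$, and $a,b,\nu,\mu\in(0,1)$ be such that (i) $D_Y,D_X,E_Y,E_X$ are non-negative measurable functions with $D_Y\le E_Y$, $D_X\le E_X$, $D_Y\le\lambda^pD_X$, $E_Y\le\lambda^pE_X$, $D_Y\le(1+\nu)\Theta^pE_X$; (ii) $\mathbb{E}D_Y>(1-\nu)\Theta^p\mathbb{E}E_X$, $\mathbb{E}D_Y>(1-\mu)\mathbb{E}E_Y$, $\mathbb{E}D_X>(1-\mu)\mathbb{E}E_X$; (iii) $\lambda^p\bigl(\frac{2\mu}{a}+\frac{2\nu}{b}\bigr)<\Theta^p(1-\nu)$. Then there exists $\omega\in\Omega$ such that $D_Y(\omega)>(1-a)E_Y(\omega)$, $D_X(\omega)>(1-a)E_X(\omega)$, and $D_Y(\omega)>(1-b)\Theta^pE_X(\omega)$.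
   Context: $\mathbb{E}$ denotes expectation on the probability space $\Omega$. *)

From HB Require Import structures.
From mathcomp Require Import all_boot all_order all_algebra.
From mathcomp Require Import all_classical all_reals all_analysis.
Set Implicit Arguments. Unset Strict Implicit. Unset Printing Implicit Defensive.

From HB Require Import structures.
From mathcomp Require Import all_boot all_order all_algebra.
From mathcomp Require Import all_classical all_reals all_analysis.
From mathcomp Require Import measurable_realfun ring lra.
Import Order.TTheory GRing.Theory Num.Theory.
Local Open Scope ring_scope.

(* Write K = Theta^p and L = lambda^p.  At a point that is not good, one of the
   three nonnegative deficits [EY - DY], [EX - DX], [(1 + nu) K EX - DY] is at
   least a fixed multiple of [DY] (for the last two via [DY <= L EX]), so if no
   point were good, a positive combination of the deficits would dominate
   [a b K DY] everywhere.  Integrating, (ii) bounds the expected deficits by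
   [mu L E EX], [mu E EX] and [2 nu K E EX], and (iii) makes the resulting
   upper bound on [E DY] smaller than its lower bound [(1 - nu) K E EX]. *)

Section weighted_deficits.
Context {R : realFieldType} (a b mu nu K L : R).
Hypotheses (a_gt0 : 0 < a) (b_gt0 : 0 < b) (mu_ge0 : 0 <= mu) (nu_ge0 : 0 <= nu).
Hypotheses (K_gt0 : 0 < K) (L_ge0 : 0 <= L).

Definition good_point (dy dx ey ex : R) :=
  [/\ (1 - a) * ey < dy, (1 - a) * ex < dx & (1 - b) * K * ex < dy].

(* [weighted_E ey ex < weighted_D dy dx] is
   [b K (ey - dy) + b K L (ex - dx) + a L ((1 + nu) K ex - dy) < a b K dy]
   with every term moved to the side where it is nonnegative; at a point that is
   not good, one of the three weighted deficits alone is at least [a b K dy]. *)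
Definition weighted_D (dy dx : R) :=
  (a * b * K + b * K + a * L) * dy + b * K * L * dx.
Definition weighted_E (ey ex : R) :=
  b * K * ey + (b * K * L + a * L * (1 + nu) * K) * ex.

Lemma weighted_D_ge0 (dy dx : R) : 0 <= dy -> 0 <= dx -> 0 <= weighted_D dy dx.
Proof.
move=> dy_ge0 dx_ge0.
have [a_ge0 b_ge0 K_ge0] := And3 (ltW a_gt0) (ltW b_gt0) (ltW K_gt0).
by rewrite /weighted_D addr_ge0 // !mulr_ge0 // !addr_ge0 // !mulr_ge0.
Qed.

Lemma good_point_of_weighted_lt (dy dx ey ex : R) :
  0 <= dx -> dy <= ey -> dx <= ex -> dy <= L * dx -> dy <= (1 + nu) * K * ex ->
  weighted_E ey ex < weighted_D dy dx -> good_point dy dx ey ex.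
Proof.
rewrite /good_point /weighted_D /weighted_E.
move=> dx_ge0 dy_le_ey dx_le_ex dy_le_Ldx dy_le_ex E_lt_D.
have bK_gt0 : 0 < b * K by rewrite mulr_gt0.
have aL_ge0 : 0 <= a * L by rewrite mulr_ge0 // ltW.
have gapY : 0 <= b * K * (ey - dy) by rewrite mulr_ge0 ?subr_ge0 // ltW.
have gapX : 0 <= b * K * L * (ex - dx).
  by rewrite mulr_ge0 ?mulr_ge0 ?subr_ge0 // ltW.
have gapK : 0 <= a * L * ((1 + nu) * K * ex - dy) by rewrite mulr_ge0 ?subr_ge0.
have ex_ge0 : 0 <= ex by apply: le_trans dx_le_ex.
have dy_le_Lex : dy <= L * ex by rewrite (le_trans dy_le_Ldx) // ler_wpM2l.
split; rewrite ltNge; apply: contraTN E_lt_D => bad; rewrite -leNgt.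
- have : a * dy <= ey - dy by have := ler_wpM2l (ltW a_gt0) dy_le_ey; lra.
  move/(ler_wpM2l (ltW bK_gt0)); lra.
- have : a * dy <= L * (ex - dx).
    rewrite (le_trans (ler_wpM2l (ltW a_gt0) dy_le_Lex)) // mulrCA.
    by rewrite ler_wpM2l //; lra.
  move/(ler_wpM2l (ltW bK_gt0)); lra.
- have : b * K * dy <= L * ((1 + nu) * K * ex - dy).
    rewrite (le_trans (ler_wpM2l (ltW bK_gt0) dy_le_Lex)) // mulrCA.
    rewrite ler_wpM2l //.
    have : 0 <= nu * K * ex by rewrite !mulr_ge0 // ltW.
    lra.
  move/(ler_wpM2l (ltW a_gt0)); lra.
Qed.

Hypothesis budget : L * (2 * mu / a + 2 * nu / b) < K * (1 - nu).

Lemma weighted_E_lt_D (X Y x y : R) :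
  0 <= X -> Y <= L * X ->
  (1 - nu) * K * X < y -> (1 - mu) * Y < y -> (1 - mu) * X < x ->
  weighted_E Y X < weighted_D y x.
Proof.
rewrite /weighted_D /weighted_E => X_ge0 Y_le_LX ltX ltY ltx.
have bK_gt0 : 0 < b * K by rewrite mulr_gt0.
have aL_ge0 : 0 <= a * L by rewrite mulr_ge0 // ltW.
have gapY : b * K * (Y - y) < b * K * (mu * (L * X)).
  rewrite ltr_pM2l //; apply: (lt_le_trans (y := mu * Y)); first lra.
  by rewrite ler_wpM2l.
have gapX : b * K * L * (X - x) <= b * K * L * (mu * X).
  by apply: ler_wpM2l; [rewrite mulr_ge0 // ltW | lra].
have gapK : a * L * ((1 + nu) * K * X - y) <= a * L * (2 * nu * K * X).
  by apply: ler_wpM2l => //; lra.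
have abKX_ge0 : 0 <= a * b * K * X by rewrite !mulr_ge0 // ltW.
have := ler_wpM2l abKX_ge0 (ltW budget).
have -> : a * b * K * X * (L * (2 * mu / a + 2 * nu / b)) =
    b * K * (mu * (L * X)) + b * K * L * (mu * X) + a * L * (2 * nu * K * X).
  by field; rewrite !gt_eqF.
have : a * b * K * ((1 - nu) * K * X) < a * b * K * y by rewrite ltr_pM2l ?mulr_gt0.
lra.
Qed.
End weighted_deficits.

Section ge0_integral.
Local Open Scope ereal_scope.
Context d (T : measurableType d) (R : realType) (m : {measure set T -> \bar R}).
Implicit Types f g : T -> R.

Lemma ge0_integral_lincomb (c1 c2 : R) f g : (0 <= c1)%R -> (0 <= c2)%R ->
  measurable_fun setT f -> measurable_fun setT g ->
  (forall w, 0 <= f w)%R -> (forall w, 0 <= g w)%R ->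
  \int[m]_w (c1 * f w + c2 * g w)%:E =
  c1%:E * \int[m]_w (f w)%:E + c2%:E * \int[m]_w (g w)%:E.
Proof.
move=> c1_ge0 c2_ge0 mf mg f_ge0 g_ge0.
under eq_integral do rewrite EFinD !EFinM.
rewrite ge0_integralD //; first last.
- by apply: measurable_funeM; exact/measurable_EFinP.
- by move=> w _; rewrite -EFinM lee_fin mulr_ge0.
- by apply: measurable_funeM; exact/measurable_EFinP.
- by move=> w _; rewrite -EFinM lee_fin mulr_ge0.
rewrite !ge0_integralZl_EFin //; try exact/measurable_EFinP.
all: by move=> w _; rewrite lee_fin.
Qed.

Lemma ge0_le_integral_scale (c : R) f g : (0 <= c)%R ->
  measurable_fun setT f -> measurable_fun setT g ->
  (forall w, 0 <= f w)%R -> (forall w, 0 <= g w)%R -> (forall w, f w <= c * g w)%R ->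
  \int[m]_w (f w)%:E <= c%:E * \int[m]_w (g w)%:E.
Proof.
move=> c_ge0 mf mg f_ge0 g_ge0 f_le_cg.
rewrite -ge0_integralZl_EFin //; last 2 first.
- by move=> w _; rewrite lee_fin.
- exact/measurable_EFinP.
apply: ge0_le_integral => //.
- by move=> w _; rewrite lee_fin.
- exact/measurable_EFinP.
- by apply: measurable_funeM; exact/measurable_EFinP.
- by move=> w _; rewrite -EFinM lee_fin.
Qed.

Lemma exists_lt_of_ge0_integral_lt f g :
  measurable_fun setT f -> measurable_fun setT g -> (forall w, 0 <= g w)%R ->
  \int[m]_w (f w)%:E < \int[m]_w (g w)%:E -> exists w, (f w < g w)%R.
Proof.
move=> mf mg g_ge0 int_lt; apply: contrapT => no_w.
have g_le_f w : (g w <= f w)%R by rewrite leNgt; apply/negP => ?; apply: no_w; exists w.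
move: int_lt; apply/negP; rewrite -leNgt; apply: ge0_le_integral => //.
- by move=> w _; rewrite lee_fin.
- exact/measurable_EFinP.
- exact/measurable_EFinP.
- by move=> w _; rewrite lee_fin.
Qed.

End ge0_integral.

Lemma fin_num_of_pmule_lt (R : realType) (c : R) (e x : \bar R) :
  (0 < c)%R -> (0 <= e)%E -> (c%:E * e < x)%E -> e \is a fin_num.
Proof. by move=> c_gt0; case: e => // _; rewrite gt0_muley ?lte_fin //; case: x. Qed.

Section good_point_existence.
Local Open Scope ereal_scope.
Context d (T : measurableType d) (R : realType) (m : {measure set T -> \bar R}).
Variables (DY DX EY EX : T -> R) (a b mu nu K L : R).
Hypotheses (a_gt0 : (0 < a)%R) (b_gt0 : (0 < b)%R).
Hypotheses (mu_ge0 : (0 <= mu)%R) (nu_ge0 : (0 <= nu)%R).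
Hypotheses (K_gt0 : (0 < K)%R) (L_ge0 : (0 <= L)%R).
Hypotheses (mDY : measurable_fun setT DY) (mDX : measurable_fun setT DX).
Hypotheses (mEY : measurable_fun setT EY) (mEX : measurable_fun setT EX).
Hypotheses (DY_ge0 : forall w, (0 <= DY w)%R) (DX_ge0 : forall w, (0 <= DX w)%R).
Hypotheses (EY_ge0 : forall w, (0 <= EY w)%R) (EX_ge0 : forall w, (0 <= EX w)%R).
Hypotheses (DY_le_EY : forall w, (DY w <= EY w)%R).
Hypotheses (DX_le_EX : forall w, (DX w <= EX w)%R).
Hypotheses (DY_le_LDX : forall w, (DY w <= L * DX w)%R).
Hypotheses (EY_le_LEX : forall w, (EY w <= L * EX w)%R).
Hypotheses (DY_le_KEX : forall w, (DY w <= (1 + nu) * K * EX w)%R).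
Hypothesis budget : (L * (2 * mu / a + 2 * nu / b) < K * (1 - nu))%R.

Lemma integral_EY_le : \int[m]_w (EY w)%:E <= L%:E * \int[m]_w (EX w)%:E.
Proof. exact: ge0_le_integral_scale. Qed.

Lemma integrals_fin_num :
  ((1 - nu) * K)%:E * \int[m]_w (EX w)%:E < \int[m]_w (DY w)%:E ->
  [/\ \int[m]_w (EX w)%:E \is a fin_num, \int[m]_w (EY w)%:E \is a fin_num,
      \int[m]_w (DY w)%:E \is a fin_num & \int[m]_w (DX w)%:E \is a fin_num].
Proof.
move=> int_DY_gt_KEX.
have int_ge0 (f : T -> R) : (forall w, 0 <= f w)%R -> 0 <= \int[m]_w (f w)%:E.
  by move=> f_ge0; apply: integral_ge0 => w _; rewrite lee_fin.
have nu_lt1 : (0 < 1 - nu)%R.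
  have : (0 <= L * (2 * mu / a + 2 * nu / b))%R.
    by rewrite mulr_ge0 // addr_ge0 // divr_ge0 ?mulr_ge0 // ltW.
  by move=> /le_lt_trans /(_ budget); rewrite pmulr_rgt0.
have /EFin_fin_numP[X eX] : \int[m]_w (EX w)%:E \is a fin_num.
  by apply: fin_num_of_pmule_lt int_DY_gt_KEX; rewrite ?mulr_gt0 ?int_ge0.
have int_EY_fin : \int[m]_w (EY w)%:E \is a fin_num.
  by rewrite ge0_fin_numE ?int_ge0 // (le_lt_trans integral_EY_le) // eX ltry.
have int_DY_le : \int[m]_w (DY w)%:E <= \int[m]_w (EY w)%:E.
  by apply: ge0_le_integral => // [w _|||w _];
    rewrite ?lee_fin //; exact/measurable_EFinP.
have int_DX_le : \int[m]_w (DX w)%:E <= \int[m]_w (EX w)%:E.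
  by apply: ge0_le_integral => // [w _|||w _];
    rewrite ?lee_fin //; exact/measurable_EFinP.
split; rewrite ?eX // ge0_fin_numE ?int_ge0 //.
- by rewrite (le_lt_trans int_DY_le) // -ge0_fin_numE ?int_ge0.
- by rewrite (le_lt_trans int_DX_le) // eX ltry.
Qed.

Lemma integral_weighted_E_lt_D :
  ((1 - nu) * K)%:E * \int[m]_w (EX w)%:E < \int[m]_w (DY w)%:E ->
  (1 - mu)%:E * \int[m]_w (EY w)%:E < \int[m]_w (DY w)%:E ->
  (1 - mu)%:E * \int[m]_w (EX w)%:E < \int[m]_w (DX w)%:E ->
  \int[m]_w (weighted_E a b nu K L (EY w) (EX w))%:E <
  \int[m]_w (weighted_D a b K L (DY w) (DX w))%:E.
Proof.
move=> int_DY_gt_KEX int_DY_gt_EY int_DX_gt_EX.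
have [a_ge0 b_ge0 K_ge0] := And3 (ltW a_gt0) (ltW b_gt0) (ltW K_gt0).
have bK_ge0 : (0 <= b * K)%R by rewrite mulr_ge0.
have bKL_ge0 : (0 <= b * K * L)%R by rewrite mulr_ge0.
have aL_ge0 : (0 <= a * L)%R by rewrite mulr_ge0.
have abK_ge0 : (0 <= a * b * K)%R by rewrite !mulr_ge0.
have aLnuK_ge0 : (0 <= a * L * (1 + nu) * K)%R by rewrite !mulr_ge0 ?addr_ge0.
rewrite !ge0_integral_lincomb ?addr_ge0 //.
have X_ge0 : 0 <= \int[m]_w (EX w)%:E by apply: integral_ge0 => w _; rewrite lee_fin.
have fin_ints := integrals_fin_num int_DY_gt_KEX.
move: X_ge0 integral_EY_le int_DY_gt_KEX int_DY_gt_EY int_DX_gt_EX.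
case: fin_ints => /EFin_fin_numP[X ->] /EFin_fin_numP[Y ->] /EFin_fin_numP[y ->].
move=> /EFin_fin_numP[x ->].
rewrite -!EFinM -!EFinD !lte_fin !lee_fin.
exact: (weighted_E_lt_D a b mu nu K L).
Qed.

Lemma exists_good_point :
  ((1 - nu) * K)%:E * \int[m]_w (EX w)%:E < \int[m]_w (DY w)%:E ->
  (1 - mu)%:E * \int[m]_w (EY w)%:E < \int[m]_w (DY w)%:E ->
  (1 - mu)%:E * \int[m]_w (EX w)%:E < \int[m]_w (DX w)%:E ->
  exists w, good_point a b K (DY w) (DX w) (EY w) (EX w).
Proof.
move=> int_DY_gt_KEX int_DY_gt_EY int_DX_gt_EX.
have [w E_lt_D] : exists w,
    (weighted_E a b nu K L (EY w) (EX w) < weighted_D a b K L (DY w) (DX w))%R.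
  apply: exists_lt_of_ge0_integral_lt (integral_weighted_E_lt_D
    int_DY_gt_KEX int_DY_gt_EY int_DX_gt_EX).
  - by apply: measurable_funD; apply: measurable_funM => //; exact: measurable_cst.
  - by apply: measurable_funD; apply: measurable_funM => //; exact: measurable_cst.
  - by move=> w; apply: weighted_D_ge0.
by exists w; apply: (good_point_of_weighted_lt a b nu K L).
Qed.

End good_point_existence.

Arguments exists_good_point {d T R m DY DX EY EX a b mu nu K L}.

Local Open Scope ereal_scope.

Theorem lemma3p2 (R : realType) (d : measure_display) (T : measurableType d)
  (P : probability T R) (p : R) (DY DX EY EX : T -> R)
  (lam Th a b nu mu : R) :
  (1 < p)%R -> (0 < lam)%R -> (0 < Th)%R ->
  (0 < a < 1)%R -> (0 < b < 1)%R -> (0 < nu < 1)%R -> (0 < mu < 1)%R ->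
  (* (i) *)
  measurable_fun setT DY -> measurable_fun setT DX ->
  measurable_fun setT EY -> measurable_fun setT EX ->
  (forall w, 0 <= DY w)%R -> (forall w, 0 <= DX w)%R ->
  (forall w, 0 <= EY w)%R -> (forall w, 0 <= EX w)%R ->
  (forall w, DY w <= EY w)%R -> (forall w, DX w <= EX w)%R ->
  (forall w, DY w <= lam `^ p * DX w)%R ->
  (forall w, EY w <= lam `^ p * EX w)%R ->
  (forall w, DY w <= (1 + nu) * Th `^ p * EX w)%R ->
  (* (ii) *)
  ((1 - nu) * Th `^ p)%:E * (\int[P]_w (EX w)%:E) < \int[P]_w (DY w)%:E ->
  (1 - mu)%:E * (\int[P]_w (EY w)%:E) < \int[P]_w (DY w)%:E ->
  (1 - mu)%:E * (\int[P]_w (EX w)%:E) < \int[P]_w (DX w)%:E ->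
  (* (iii) *)
  (lam `^ p * (2 * mu / a + 2 * nu / b) < Th `^ p * (1 - nu))%R ->
  exists w : T,
    [/\ ((1 - a) * EY w < DY w)%R, ((1 - a) * EX w < DX w)%R
      & ((1 - b) * Th `^ p * EX w < DY w)%R].
Proof.
move=> _ _ Th_gt0 /andP[a_gt0 _] /andP[b_gt0 _] /andP[nu_gt0 _] /andP[mu_gt0 _].
move=> mDY mDX mEY mEX DY_ge0 DX_ge0 EY_ge0 EX_ge0 DY_le_EY DX_le_EX.
move=> DY_le_LDX EY_le_LEX DY_le_KEX int_DY_gt_KEX int_DY_gt_EY int_DX_gt_EX budget.
have K_gt0 : (0 < Th `^ p)%R by rewrite powR_gt0.
exact: (exists_good_point a_gt0 b_gt0 (ltW mu_gt0) (ltW nu_gt0) K_gt0 (powR_ge0 lam p)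
  mDY mDX mEY mEX DY_ge0 DX_ge0 EY_ge0 EX_ge0 DY_le_EY DX_le_EX DY_le_LDX
  EY_le_LEX DY_le_KEX budget int_DY_gt_KEX int_DY_gt_EY int_DX_gt_EX).
Qed.
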